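(* In the Call-by-Value probabilistic $\lambda$-calculus (as defined in the context), the full lifting $\Rrightarrow_E$ of $\rightsquigarrow_E$ is $\mathrm{obs}_{\mathrm{Nnf}}$-diamond: for all multi-distributions $\mathbf m,\mathbf n_1,\mathbf n_2$ with $\mathbf m\Rrightarrow_E\mathbf n_1$ and $\mathbf m\Rrightarrow_E\mathbf n_2$, either $\mathbf n_1=\mathbf n_2$ or there is $\mathbf s$ with $\mathbf n_1\Rrightarrow_E\mathbf s$ and $\mathbf n_2\Rrightarrow_E\mathbf s$; and moreover $\mathrm{obs}_{\mathrm{Nnf}}(\mathbf n_1)=\mathrm{obs}_{\mathrm{Nnf}}(\mathbf n_2)$.
   Context: Terms $\Lambda_\oplus$: $M::=x\mid\lambda x.M\mid MM\mid M\oplus M$; values $V::=x\mid\lambda x.M$. Contexts $C::=[\,]\mid MC\mid CM\mid\lambda x.C\mid C\oplus M\mid M\oplus C$; weak contexts $W::=[\,]\mid WM\mid MW$. A multi-distribution is a finite multiset $[p_iM_i]_{i\in I}$ with $p_i\in(0,1]$, $\sum_ip_i\le1$; $+$ is multiset union, $q\cdot[p_iM_i]_i=[(qp_i)M_i]_i$, $[M]:=[1M]$. $C[(\lambda x.M)V]\to_{\beta_v}[C[M\{V/x\}]]$; $W[M\oplus N]\to_\oplus[\tfrac12W[M],\tfrac12W[N]]$; $\to:=\to_{\beta_v}\cup\to_\oplus$; surface reduction $\to_s$ is $\to_\oplus$ together with the closure of $\beta_v$ under weak contexts. $M$ is $\to$-normal (surface-normal) if no $\mathbf m$ with $M\to\mathbf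 m$ ($M\to_s\mathbf m$); $\mathrm{Nnf}$ is the set of $\to$-normal terms. Let $\rightsquigarrow_U$ be the unbiased iteration of weak $\beta_v$-reduction on $\Lambda_\oplus$: if $M\to_wM'$ (closure of $\beta_v$ under weak contexts) then $M\rightsquigarrow_UM'$; if $M$ is $\to_w$-normal: $\lambda x.P\rightsquigarrow_U\lambda x.P'$, $PQ\rightsquigarrow_UP'Q$, $PQ\rightsquigarrow_UPQ'$, $P\oplus Q\rightsquigarrow_UP'\oplus Q$, $P\oplus Q\rightsquigarrow_UP\oplus Q'$ whenever $P\rightsquigarrow_UP'$, resp. $Q\rightsquigarrow_UQ'$. $\rightsquigarrow_E$: if $M$ is not surface-normal and $M\to_s\mathbf m$ then $M\rightsquigarrow_E\mathbf m$; if $M$ is surface-normal and $M\rightsquigarrow_UM'$ then $M\rightsquigarrow_E[M']$. The full lifting $\Rrightarrow_E$ is the least relation with: $[M]\Rrightarrow_E[M]$ if $M$ is $\to$-normal; $[M]\Rrightarrow_E\mathbf m$ if $M\rightsquigarrow_E\mathbf m$; $[p_iM_i]_{i\in I}\Rrightarrow_E\sum_ip_i\cdot\mathbf m_i$ if $[M_i]\Rrightarrow_E\mathbf m_i$ for all $i$. $\mathrm{obs}_{\mathrm{Nnf}}([p_iM_i]_{i\in I})$ is the subdistribution $\mu$ on $\mathrm{Nnf}$ with $\mu(N)=\sum_{i:\,M_i=N}p_i$. *)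

From Stdlib Require Import Reals List Permutation Arith.
Import ListNotations.
Open Scope R_scope.

(** Terms of Lambda_oplus (de Bruijn indices: terms up to alpha-equivalence). *)
Inductive term : Type :=
| Var (n : nat)
| Lam (t : term)
| App (t u : term)
| Choice (t u : term).

Definition term_eq_dec : forall t u : term, {t = u} + {t <> u}.
Proof. decide equality; apply Nat.eq_dec. Defined.

Definition is_value (t : term) : Prop :=
  match t with Var _ | Lam _ => True | _ => False end.

Fixpoint lift (k : nat) (t : term) : term :=
  match t with
  | Var n => if Nat.ltb n k then Var n else Var (S n)
  | Lam a => Lam (lift (S k) a)
  | App a b => App (lift k a) (lift k b)
  | Choice a b => Choice (lift k a) (lift k b)
  end.

Fixpoint subst (k : nat) (u : term) (t : term) : term :=
  match t with
  | Var n => if Nat.eqb n k then u else if Nat.ltb n k then Var n else Var (pred n)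
  | Lam a => Lam (subst (S k) (lift 0 u) a)
  | App a b => App (subst k u a) (subst k u b)
  | Choice a b => Choice (subst k u a) (subst k u b)
  end.

(** Multi-distributions: finite multisets [p_i M_i], represented as lists
    (multiset equality = permutation). *)
Definition mdist := list (R * term).

Definition is_mdist (m : mdist) : Prop :=
  Forall (fun pM => 0 < fst pM <= 1) m /\
  fold_right (fun pM acc => fst pM + acc) 0 m <= 1.

Definition scale (q : R) (m : mdist) : mdist :=
  map (fun pM => (q * fst pM, snd pM)) m.

Definition dirac (M : term) : mdist := [(1, M)].

Inductive beta_full : term -> term -> Prop :=
| bf_redex M V : is_value V -> beta_full (App (Lam M) V) (subst 0 V M)
| bf_appl M M' N : beta_full M M' -> beta_full (App M N) (App M' N)
| bf_appr M N N' : beta_full N N' -> beta_full (App M N) (App M N')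
| bf_lam M M' : beta_full M M' -> beta_full (Lam M) (Lam M')
| bf_choicel M M' N : beta_full M M' -> beta_full (Choice M N) (Choice M' N)
| bf_choicer M N N' : beta_full N N' -> beta_full (Choice M N) (Choice M N').

Inductive beta_weak : term -> term -> Prop :=
| bw_redex M V : is_value V -> beta_weak (App (Lam M) V) (subst 0 V M)
| bw_appl M M' N : beta_weak M M' -> beta_weak (App M N) (App M' N)
| bw_appr M N N' : beta_weak N N' -> beta_weak (App M N) (App M N').

(** oplus_step T A B : T = W[M (+) N], A = W[M], B = W[N]. *)
Inductive oplus_step : term -> term -> term -> Prop :=
| os_redex M N : oplus_step (Choice M N) M N
| os_appl T A B P : oplus_step T A B -> oplus_step (App T P) (App A P) (App B P)
| os_appr T A B P : oplus_step T A B -> oplus_step (App P T) (App P A) (App P B).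

Definition oplus_md (A B : term) : mdist := [(1/2, A); (1/2, B)].

Inductive step : term -> mdist -> Prop :=
| st_beta M M' : beta_full M M' -> step M (dirac M')
| st_oplus M A B : oplus_step M A B -> step M (oplus_md A B).

Inductive surf_step : term -> mdist -> Prop :=
| ss_beta M M' : beta_weak M M' -> surf_step M (dirac M')
| ss_oplus M A B : oplus_step M A B -> surf_step M (oplus_md A B).

Definition Nnf (M : term) : Prop := forall m, ~ step M m.
Definition surf_normal (M : term) : Prop := forall m, ~ surf_step M m.
Definition weak_normal (M : term) : Prop := forall M', ~ beta_weak M M'.

Inductive stepU : term -> term -> Prop :=
| U_weak M M' : beta_weak M M' -> stepU M M'
| U_lam P P' : weak_normal (Lam P) -> stepU P P' -> stepU (Lam P) (Lam P')
| U_appl P P' Q : weak_normal (App P Q) -> stepU P P' -> stepU (App P Q) (App P' Q)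
| U_appr P Q Q' : weak_normal (App P Q) -> stepU Q Q' -> stepU (App P Q) (App P Q')
| U_choicel P P' Q : weak_normal (Choice P Q) -> stepU P P' -> stepU (Choice P Q) (Choice P' Q)
| U_choicer P Q Q' : weak_normal (Choice P Q) -> stepU Q Q' -> stepU (Choice P Q) (Choice P Q').

Inductive stepE : term -> mdist -> Prop :=
| E_surf M m : ~ surf_normal M -> surf_step M m -> stepE M m
| E_U M M' : surf_normal M -> stepU M M' -> stepE M (dirac M').

(** [M] =>_E m  (the two base rules of the full lifting). *)
Definition lift1 (M : term) (m : mdist) : Prop :=
  (Nnf M /\ m = dirac M) \/ stepE M m.

(** Componentwise lifting, with result sum_i p_i . m_i (list concatenation). *)
Inductive liftL : mdist -> mdist -> Prop :=
| liftL_nil : liftL [] []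
| liftL_cons p M m l s : lift1 M m -> liftL l s -> liftL ((p, M) :: l) (scale p m ++ s).

(** The full lifting =>_E, on multisets (closed under permutation of the result). *)
Definition fullLiftE (m s : mdist) : Prop :=
  exists s', liftL m s' /\ Permutation s' s.

(** obs_Nnf m, as a function on terms; it is meant to be read on Nnf only. *)
Definition obs_Nnf (m : mdist) (N : term) : R :=
  fold_right (fun pM acc =>
    (if term_eq_dec (snd pM) N then fst pM else 0) + acc) 0 m.

From Stdlib Require Import Reals List Permutation Classical.
Import ListNotations.
Open Scope R_scope.

Set Implicit Arguments.

(* Weak beta_v reduction, the oplus step and the unbiased reduction ~>_U are each
   diamond on single terms, and a weak beta_v step commutes with an oplus step.
   A term takes ~>_E steps of one kind only (surface steps or ~>_U steps,
   depending on whether it is surface-normal), so two ~>_E steps from one term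
   either coincide or close in one more =>_E step on each side; in the latter
   case every term of both results still reduces, so neither result charges a
   normal form.  The full lifting acts componentwise, so both facts carry over
   to multi-distributions.  Since =>_E is total (normal terms step to
   themselves), a common reduct always exists. *)

Lemma beta_weak_full M M' : beta_weak M M' -> beta_full M M'.
Proof. induction 1; auto using beta_full. Qed.

Lemma stepU_full M M' : stepU M M' -> beta_full M M'.
Proof. induction 1; auto using beta_full, beta_weak_full. Qed.

Lemma surf_step_step M m : surf_step M m -> step M m.
Proof. destruct 1; auto using step, beta_weak_full. Qed.

Lemma step_not_Nnf M m : step M m -> ~ Nnf M.
Proof. intros Hs HN; exact (HN m Hs). Qed.

Lemma surf_step_not_Nnf M m : surf_step M m -> ~ Nnf M.
Proof. intros Hs; exact (step_not_Nnf (surf_step_step Hs)). Qed.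

Lemma stepE_not_Nnf M m : stepE M m -> ~ Nnf M.
Proof.
  destruct 1 as [M m _ Hs | M M' _ HU].
  - exact (surf_step_not_Nnf Hs).
  - exact (step_not_Nnf (st_beta _ _ (stepU_full HU))).
Qed.

Definition oplus_normal (M : term) : Prop := forall A B, ~ oplus_step M A B.

Definition is_lam (M : term) : Prop := match M with Lam _ => True | _ => False end.

Lemma value_weak_normal V : is_value V -> weak_normal V.
Proof. destruct V; simpl; try contradiction; intros _ V' H; inversion H. Qed.

Lemma value_oplus_normal V : is_value V -> oplus_normal V.
Proof. destruct V; simpl; try contradiction; intros _ A B H; inversion H. Qed.

Lemma lam_weak_normal P : weak_normal (Lam P).
Proof. apply value_weak_normal; exact I. Qed.

Lemma choice_weak_normal P Q : weak_normal (Choice P Q).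
Proof. intros M' H; inversion H. Qed.

Lemma weak_normal_app P Q :
  weak_normal (App P Q) <-> weak_normal P /\ weak_normal Q /\ ~ (is_lam P /\ is_value Q).
Proof.
  split.
  - intros Hw; split; [|split].
    + intros P' Hb; exact (Hw _ (bw_appl _ _ Q Hb)).
    + intros Q' Hb; exact (Hw _ (bw_appr P _ _ Hb)).
    + destruct P; simpl; try tauto.
      intros [_ HV]; exact (Hw _ (bw_redex P Q HV)).
  - intros (HP & HQ & Hr) M' Hb; inversion Hb; subst.
    + apply Hr; simpl; auto.
    + eapply HP; eassumption.
    + eapply HQ; eassumption.
Qed.

Lemma oplus_normal_app P Q : oplus_normal (App P Q) <-> oplus_normal P /\ oplus_normal Q.
Proof.
  split.
  - intros Ho; split; intros A B H; eapply Ho; eauto using oplus_step.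
  - intros [HP HQ] A B H; inversion H; subst; [eapply HP | eapply HQ]; eassumption.
Qed.

Lemma surf_normal_iff M : surf_normal M <-> weak_normal M /\ oplus_normal M.
Proof.
  split.
  - intros Hn; split; [intros M' Hb | intros A B Ho]; eapply Hn; eauto using surf_step.
  - intros [Hw Ho] m Hs; destruct Hs; [eapply Hw | eapply Ho]; eassumption.
Qed.

(* From a weak-normal term, ~>_U only reduces strictly below the root. *)
Lemma stepU_reflects_head M M' : weak_normal M -> stepU M M' ->
  (is_lam M' -> is_lam M) /\ (is_value M' -> is_value M).
Proof. intros Hw Hs; destruct Hs; [exfalso; eapply Hw; eassumption | ..]; simpl; tauto. Qed.

Lemma stepU_weak_normal M M' : stepU M M' -> weak_normal M -> weak_normal M'.
Proof.
  induction 1 as [M M' Hb | | P P' Q Hw HP IH | P Q Q' Hw HQ IH | |]; intros Hw'.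
  - exfalso; exact (Hw' _ Hb).
  - apply lam_weak_normal.
  - apply weak_normal_app in Hw as (HwP & HwQ & Hr).
    destruct (stepU_reflects_head HwP HP) as [Hlam _].
    apply weak_normal_app; split; [auto | split; [auto | tauto]].
  - apply weak_normal_app in Hw as (HwP & HwQ & Hr).
    destruct (stepU_reflects_head HwQ HQ) as [_ Hval].
    apply weak_normal_app; split; [auto | split; [auto | tauto]].
  - apply choice_weak_normal.
  - apply choice_weak_normal.
Qed.

Lemma stepU_oplus_normal M M' : stepU M M' -> weak_normal M -> oplus_normal M -> oplus_normal M'.
Proof.
  induction 1 as [M M' Hb | | P P' Q Hw _ IH | P Q Q' Hw _ IH | P P' Q | P Q Q'];
    intros Hw' Ho.
  - exfalso; exact (Hw' _ Hb).
  - apply value_oplus_normal; exact I.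
  - apply weak_normal_app in Hw as (HwP & _); apply oplus_normal_app in Ho as [HoP HoQ].
    apply oplus_normal_app; auto.
  - apply weak_normal_app in Hw as (_ & HwQ & _); apply oplus_normal_app in Ho as [HoP HoQ].
    apply oplus_normal_app; auto.
  - exfalso; exact (Ho _ _ (os_redex P Q)).
  - exfalso; exact (Ho _ _ (os_redex P Q)).
Qed.

Lemma stepU_surf_normal M M' : stepU M M' -> surf_normal M -> surf_normal M'.
Proof.
  intros Hs Hn; apply surf_normal_iff in Hn as [Hw Ho].
  apply surf_normal_iff; eauto using stepU_weak_normal, stepU_oplus_normal.
Qed.

Ltac value_step_contra :=
  match goal with
  | HV : is_value ?V, H : beta_weak ?V _ |- _ => exact (value_weak_normal HV H)
  | H : beta_weak (Lam _) _ |- _ => inversion H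
  | HV : is_value ?V, H : oplus_step ?V _ _ |- _ => exact (value_oplus_normal HV H)
  | H : oplus_step (Lam _) _ _ |- _ => inversion H
  end.

Lemma beta_weak_diamond M M1 M2 : beta_weak M M1 -> beta_weak M M2 ->
  M1 = M2 \/ exists M3, beta_weak M1 M3 /\ beta_weak M2 M3.
Proof.
  intros H1; revert M2.
  induction H1 as [M V HV | M M' N H1 IH | M N N' H1 IH]; intros M2 H2;
    inversion H2 as [M0 V0 HV0 | M0 M0' N0 H2' | M0 N0 N0' H2']; subst;
    try solve [left; reflexivity | exfalso; value_step_contra].
  - destruct (IH _ H2') as [<- | (M3 & X & Y)]; [left; reflexivity |].
    right; exists (App M3 N); auto using beta_weak.
  - right; exists (App M' N0'); auto using beta_weak.
  - right; exists (App M0' N'); auto using beta_weak.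
  - destruct (IH _ H2') as [<- | (M3 & X & Y)]; [left; reflexivity |].
    right; exists (App M M3); auto using beta_weak.
Qed.

Lemma beta_weak_oplus_commute M M1 A B : beta_weak M M1 -> oplus_step M A B ->
  exists A' B', oplus_step M1 A' B' /\ beta_weak A A' /\ beta_weak B B'.
Proof.
  intros H1; revert A B.
  induction H1 as [M V HV | M M' N H1 IH | M N N' H1 IH]; intros A B Ho;
    inversion Ho as [| T A0 B0 P Ho' | T A0 B0 P Ho']; subst;
    try solve [exfalso; value_step_contra].
  - destruct (IH _ _ Ho') as (A' & B' & O & X & Y).
    exists (App A' N), (App B' N); auto using oplus_step, beta_weak.
  - exists (App M' A0), (App M' B0); auto using oplus_step, beta_weak.
  - exists (App A0 N'), (App B0 N'); auto using oplus_step, beta_weak.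
  - destruct (IH _ _ Ho') as (A' & B' & O & X & Y).
    exists (App M A'), (App M B'); auto using oplus_step, beta_weak.
Qed.

Lemma oplus_step_diamond M A1 B1 A2 B2 : oplus_step M A1 B1 -> oplus_step M A2 B2 ->
  (A1 = A2 /\ B1 = B2) \/
  exists C D E F, oplus_step A1 C D /\ oplus_step B1 E F /\
                  oplus_step A2 C E /\ oplus_step B2 D F.
Proof.
  intros H1; revert A2 B2.
  induction H1 as [M N | T A B P H1 IH | T A B P H1 IH]; intros A2 B2 H2;
    inversion H2 as [M0 N0 | T0 A0 B0 P0 H2' | T0 A0 B0 P0 H2']; subst.
  - left; auto.
  - destruct (IH _ _ H2') as [[<- <-] | (C & D & E & F & X1 & X2 & X3 & X4)]; [left; auto |].
    right; exists (App C P), (App D P), (App E P), (App F P); auto using oplus_step.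
  - right; exists (App A A0), (App A B0), (App B A0), (App B B0); auto using oplus_step.
  - right; exists (App A0 A), (App B0 A), (App A0 B), (App B0 B); auto using oplus_step.
  - destruct (IH _ _ H2') as [[<- <-] | (C & D & E & F & X1 & X2 & X3 & X4)]; [left; auto |].
    right; exists (App P C), (App P D), (App P E), (App P F); auto using oplus_step.
Qed.

Lemma stepU_diamond M M1 M2 : stepU M M1 -> stepU M M2 ->
  M1 = M2 \/ exists M3, stepU M1 M3 /\ stepU M2 M3.
Proof.
  intros H1; revert M2.
  induction H1 as [M M1 Hb | P P' Hw H IH | P P' Q Hw H IH | P Q Q' Hw H IH
                  | P P' Q Hw H IH | P Q Q' Hw H IH]; intros M2 H2.
  - destruct H2 as [M M2 Hb2 | ? ? Hw2 | ? ? ? Hw2 | ? ? ? Hw2 | ? ? ? Hw2 | ? ? ? Hw2];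
      try solve [exfalso; exact (Hw2 _ Hb)].
    destruct (beta_weak_diamond Hb Hb2) as [<- | (M3 & X & Y)]; [left; reflexivity |].
    right; exists M3; auto using stepU.
  - inversion H2 as [? ? Hb2 | ? P2 _ H2' | | | |]; subst; [exfalso; exact (Hw _ Hb2) |].
    destruct (IH _ H2') as [<- | (M3 & X & Y)]; [left; reflexivity |].
    right; exists (Lam M3); split; apply U_lam; auto using lam_weak_normal.
  - assert (Hw1 := stepU_weak_normal (U_appl _ _ _ Hw H) Hw).
    assert (Hw2 := stepU_weak_normal H2 Hw).
    inversion H2 as [? ? Hb2 | | ? P2 ? _ H2' | ? ? Q2 _ H2' | |]; subst;
      [exfalso; exact (Hw _ Hb2) | |].
    + destruct (IH _ H2') as [<- | (M3 & X & Y)]; [left; reflexivity |].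
      right; exists (App M3 Q); auto using stepU.
    + right; exists (App P' Q2); auto using stepU.
  - assert (Hw1 := stepU_weak_normal (U_appr _ _ _ Hw H) Hw).
    assert (Hw2 := stepU_weak_normal H2 Hw).
    inversion H2 as [? ? Hb2 | | ? P2 ? _ H2' | ? ? Q2 _ H2' | |]; subst;
      [exfalso; exact (Hw _ Hb2) | |].
    + right; exists (App P2 Q'); auto using stepU.
    + destruct (IH _ H2') as [<- | (M3 & X & Y)]; [left; reflexivity |].
      right; exists (App P M3); auto using stepU.
  - inversion H2 as [? ? Hb2 | | | | ? P2 ? _ H2' | ? ? Q2 _ H2']; subst;
      [exfalso; exact (Hw _ Hb2) | |].
    + destruct (IH _ H2') as [<- | (M3 & X & Y)]; [left; reflexivity |].
      right; exists (Choice M3 Q); auto using stepU, choice_weak_normal.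
    + right; exists (Choice P' Q2); auto using stepU, choice_weak_normal.
  - inversion H2 as [? ? Hb2 | | | | ? P2 ? _ H2' | ? ? Q2 _ H2']; subst;
      [exfalso; exact (Hw _ Hb2) | |].
    + right; exists (Choice P2 Q'); auto using stepU, choice_weak_normal.
    + destruct (IH _ H2') as [<- | (M3 & X & Y)]; [left; reflexivity |].
      right; exists (Choice P M3); auto using stepU, choice_weak_normal.
Qed.

Lemma stepU_of_not_weak_normal M : ~ weak_normal M -> exists M', stepU M M'.
Proof.
  intros Hw; apply not_all_not_ex in Hw as [M' Hb]; exists M'; apply U_weak; exact Hb.
Qed.

Lemma beta_full_stepU M M' : beta_full M M' -> exists M'', stepU M M''.
Proof.
  induction 1 as [M V HV | M M' N _ [P HP] | M N N' _ [P HP] | M M' _ [P HP]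
                 | M M' N _ [P HP] | M N N' _ [P HP]].
  - eexists; apply U_weak, bw_redex; exact HV.
  - destruct (classic (weak_normal (App M N))) as [Hw | Hw];
      [eexists; apply U_appl; eassumption | exact (stepU_of_not_weak_normal Hw)].
  - destruct (classic (weak_normal (App M N))) as [Hw | Hw];
      [eexists; apply U_appr; eassumption | exact (stepU_of_not_weak_normal Hw)].
  - eexists; apply U_lam; [apply lam_weak_normal | eassumption].
  - eexists; apply U_choicel; [apply choice_weak_normal | eassumption].
  - eexists; apply U_choicer; [apply choice_weak_normal | eassumption].
Qed.

Lemma lift1_total M : exists m, lift1 M m.
Proof.
  destruct (classic (Nnf M)) as [HN | HN]; [exists (dirac M); left; auto |].
  destruct (classic (surf_normal M)) as [Hn | Hn].
  - apply not_all_not_ex in HN as [m Hm].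
    inversion Hm as [? M' Hb | ? A B Ho]; subst.
    + destruct (beta_full_stepU Hb) as [M'' HU].
      exists (dirac M''); right; apply E_U; assumption.
    + exfalso; exact (Hn _ (ss_oplus _ _ _ Ho)).
  - destruct (not_all_not_ex _ _ Hn) as [m Hs].
    exists m; right; apply E_surf; assumption.
Qed.

Lemma scale_app q a b : scale q (a ++ b) = scale q a ++ scale q b.
Proof. apply map_app. Qed.

Lemma scale_scale q p m : scale q (scale p m) = scale (q * p) m.
Proof.
  unfold scale; rewrite map_map; apply map_ext; intros [x M]; simpl.
  rewrite Rmult_assoc; reflexivity.
Qed.

Lemma scale_1 m : scale 1 m = m.
Proof.
  unfold scale; induction m as [| [p M] m IH]; simpl; [reflexivity |].
  rewrite Rmult_1_l, IH; reflexivity.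
Qed.

Lemma liftL_app a sa b sb : liftL a sa -> liftL b sb -> liftL (a ++ b) (sa ++ sb).
Proof.
  intros Ha Hb; induction Ha; simpl; [exact Hb |].
  rewrite <- app_assoc; constructor; assumption.
Qed.

Lemma liftL_scale q a s : liftL a s -> liftL (scale q a) (scale q s).
Proof.
  induction 1; simpl; [constructor |].
  rewrite scale_app, scale_scale; constructor; assumption.
Qed.

Lemma liftL_perm a b s : Permutation a b -> liftL a s ->
  exists s', liftL b s' /\ Permutation s s'.
Proof.
  intros P; revert s; induction P as [| [p M] a b P IH | [p M] [q N] a | a b c _ IH1 _ IH2];
    intros s Hs.
  - exists s; auto.
  - inversion Hs as [| ? ? m ? s0 Hm Hs0]; subst.
    destruct (IH _ Hs0) as (s' & X & Y).
    exists (scale p m ++ s'); split; [constructor | apply Permutation_app_head]; assumption.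
  - inversion Hs as [| ? ? n ? s0 Hn Hs0]; subst.
    inversion Hs0 as [| ? ? m ? s1 Hm Hs1]; subst.
    exists (scale p m ++ scale q n ++ s1); split; [constructor; [exact Hm | constructor; assumption] |].
    rewrite !app_assoc; apply Permutation_app_tail, Permutation_app_comm.
  - destruct (IH1 _ Hs) as (s1 & X1 & Y1); destruct (IH2 _ X1) as (s2 & X2 & Y2).
    exists s2; split; [exact X2 | exact (perm_trans Y1 Y2)].
Qed.

Lemma fullLiftE_app a s b t : fullLiftE a s -> fullLiftE b t -> fullLiftE (a ++ b) (s ++ t).
Proof.
  intros (s' & Hs & Ps) (t' & Ht & Pt).
  exists (s' ++ t'); split; [apply liftL_app | apply Permutation_app]; assumption.
Qed.

Lemma fullLiftE_scale q a s : fullLiftE a s -> fullLiftE (scale q a) (scale q s).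
Proof.
  intros (s' & Hs & Ps).
  exists (scale q s'); split; [apply liftL_scale | apply Permutation_map]; assumption.
Qed.

Lemma fullLiftE_perm_l a b s : Permutation a b -> fullLiftE a s -> fullLiftE b s.
Proof.
  intros P (s' & Hs & Ps).
  destruct (liftL_perm P Hs) as (s'' & X & Y).
  exists s''; split; [exact X | exact (perm_trans (Permutation_sym Y) Ps)].
Qed.

Lemma fullLiftE_perm_r a s t : fullLiftE a s -> Permutation s t -> fullLiftE a t.
Proof.
  intros (s' & Hs & Ps) P; exists s'; split; [exact Hs | exact (perm_trans Ps P)].
Qed.

Lemma fullLiftE_total a : exists s, fullLiftE a s.
Proof.
  induction a as [| [p M] a (s & s' & Hs & Ps)]; [exists []; exists []; auto using liftL |].
  destruct (lift1_total M) as [m Hm].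
  exists (scale p m ++ s); exists (scale p m ++ s').
  split; [constructor | apply Permutation_app_head]; assumption.
Qed.

Lemma fullLiftE_dirac M m : lift1 M m -> fullLiftE (dirac M) m.
Proof.
  intros Hm; exists (scale 1 m ++ []); split; [constructor; [exact Hm | constructor] |].
  rewrite app_nil_r, scale_1; reflexivity.
Qed.

Lemma fullLiftE_oplus_md A B a b : lift1 A a -> lift1 B b ->
  fullLiftE (oplus_md A B) (scale (1/2) a ++ scale (1/2) b).
Proof.
  intros Ha Hb; exists (scale (1/2) a ++ scale (1/2) b ++ []).
  split; [do 2 (constructor; [assumption |]); constructor | rewrite app_nil_r; reflexivity].
Qed.

Definition normal_free (m : mdist) : Prop := Forall (fun pM => ~ Nnf (snd pM)) m.

Definition joinable (m1 m2 : mdist) : Prop := exists s, fullLiftE m1 s /\ fullLiftE m2 s.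

(* Results that differ must contain no normal form, so that obs_Nnf cannot see them. *)
Definition obs_joinable (m1 m2 : mdist) : Prop :=
  m1 = m2 \/ (normal_free m1 /\ normal_free m2 /\ joinable m1 m2).

Lemma obs_joinable_sym m1 m2 : obs_joinable m1 m2 -> obs_joinable m2 m1.
Proof.
  intros [-> | (F1 & F2 & s & X & Y)]; [left; reflexivity |].
  right; split; [exact F2 | split; [exact F1 | exists s; split; assumption]].
Qed.

Lemma normal_free_dirac M : ~ Nnf M -> normal_free (dirac M).
Proof. intros HM; constructor; [exact HM | constructor]. Qed.

Lemma normal_free_oplus_md A B : ~ Nnf A -> ~ Nnf B -> normal_free (oplus_md A B).
Proof. intros HA HB; constructor; [exact HA | constructor; [exact HB | constructor]]. Qed.

Lemma surf_step_lift1 M m : surf_step M m -> lift1 M m.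
Proof. intros Hs; right; apply E_surf; [intros Hn; exact (Hn m Hs) | exact Hs]. Qed.

Lemma beta_weak_obs_joinable M M1 M2 : beta_weak M M1 -> beta_weak M M2 ->
  obs_joinable (dirac M1) (dirac M2).
Proof.
  intros H1 H2; destruct (beta_weak_diamond H1 H2) as [<- | (M3 & X & Y)]; [left; reflexivity |].
  pose proof (ss_beta _ _ X) as S1; pose proof (ss_beta _ _ Y) as S2.
  right; split; [|split].
  - exact (normal_free_dirac (surf_step_not_Nnf S1)).
  - exact (normal_free_dirac (surf_step_not_Nnf S2)).
  - exists (dirac M3); split; apply fullLiftE_dirac, surf_step_lift1; assumption.
Qed.

Lemma beta_weak_oplus_obs_joinable M M1 A B : beta_weak M M1 -> oplus_step M A B ->
  obs_joinable (dirac M1) (oplus_md A B).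
Proof.
  intros Hb Ho; destruct (beta_weak_oplus_commute Hb Ho) as (A' & B' & Ho' & HA & HB).
  pose proof (ss_oplus _ _ _ Ho') as S1.
  pose proof (ss_beta _ _ HA) as SA; pose proof (ss_beta _ _ HB) as SB.
  right; split; [|split].
  - exact (normal_free_dirac (surf_step_not_Nnf S1)).
  - exact (normal_free_oplus_md (surf_step_not_Nnf SA) (surf_step_not_Nnf SB)).
  - exists (oplus_md A' B'); split; [apply fullLiftE_dirac, surf_step_lift1; exact S1 |].
    replace (oplus_md A' B') with (scale (1/2) (dirac A') ++ scale (1/2) (dirac B')).
    + apply fullLiftE_oplus_md; apply surf_step_lift1; assumption.
    + unfold scale, dirac, oplus_md; simpl; rewrite Rmult_1_r; reflexivity.
Qed.

Lemma oplus_obs_joinable M A1 B1 A2 B2 : oplus_step M A1 B1 -> oplus_step M A2 B2 ->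
  obs_joinable (oplus_md A1 B1) (oplus_md A2 B2).
Proof.
  intros H1 H2; destruct (oplus_step_diamond H1 H2)
    as [[<- <-] | (C & D & E & F & HA1 & HB1 & HA2 & HB2)]; [left; reflexivity |].
  pose proof (ss_oplus _ _ _ HA1) as SA1; pose proof (ss_oplus _ _ _ HB1) as SB1.
  pose proof (ss_oplus _ _ _ HA2) as SA2; pose proof (ss_oplus _ _ _ HB2) as SB2.
  right; split; [|split].
  - exact (normal_free_oplus_md (surf_step_not_Nnf SA1) (surf_step_not_Nnf SB1)).
  - exact (normal_free_oplus_md (surf_step_not_Nnf SA2) (surf_step_not_Nnf SB2)).
  - exists (scale (1/2) (oplus_md C D) ++ scale (1/2) (oplus_md E F)); split.
    + apply fullLiftE_oplus_md; apply surf_step_lift1; assumption.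
    + eapply fullLiftE_perm_r;
        [apply fullLiftE_oplus_md; apply surf_step_lift1; eassumption |].
      unfold scale, oplus_md; simpl; apply perm_skip, perm_swap.
Qed.

Lemma surf_step_obs_joinable M m1 m2 : surf_step M m1 -> surf_step M m2 -> obs_joinable m1 m2.
Proof.
  intros [? M1 Hb1 | ? A1 B1 Ho1] H2; inversion H2 as [? M2 Hb2 | ? A2 B2 Ho2]; subst.
  - exact (beta_weak_obs_joinable Hb1 Hb2).
  - exact (beta_weak_oplus_obs_joinable Hb1 Ho2).
  - exact (obs_joinable_sym (beta_weak_oplus_obs_joinable Hb2 Ho1)).
  - exact (oplus_obs_joinable Ho1 Ho2).
Qed.

Lemma stepU_obs_joinable M M1 M2 : surf_normal M -> stepU M M1 -> stepU M M2 ->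
  obs_joinable (dirac M1) (dirac M2).
Proof.
  intros Hn H1 H2; destruct (stepU_diamond H1 H2) as [<- | (M3 & X & Y)]; [left; reflexivity |].
  assert (Close : forall N, stepU M N -> stepU N M3 ->
                    ~ Nnf N /\ fullLiftE (dirac N) (dirac M3)).
  { intros N HN HN3; split; [exact (step_not_Nnf (st_beta _ _ (stepU_full HN3))) |].
    apply fullLiftE_dirac; right; apply E_U; [exact (stepU_surf_normal HN Hn) | exact HN3]. }
  destruct (Close _ H1 X) as [N1 J1], (Close _ H2 Y) as [N2 J2].
  right; split; [|split]; [apply normal_free_dirac; assumption .. |].
  exists (dirac M3); split; assumption.
Qed.

Lemma lift1_obs_joinable M m1 m2 : lift1 M m1 -> lift1 M m2 -> obs_joinable m1 m2.
Proof.
  intros [[HN ->] | H1] [[HN' ->] | H2].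
  - left; reflexivity.
  - destruct (stepE_not_Nnf H2 HN).
  - destruct (stepE_not_Nnf H1 HN').
  - destruct H1 as [? m1 _ Hs1 | ? M1 Hn HU1];
      inversion H2 as [? ? Hn2 Hs2 | ? M2 Hn2 HU2]; subst.
    + exact (surf_step_obs_joinable Hs1 Hs2).
    + destruct (Hn2 _ Hs1).
    + destruct (Hn _ Hs2).
    + exact (stepU_obs_joinable Hn HU1 HU2).
Qed.

Definition obs_equiv (m1 m2 : mdist) : Prop :=
  forall N, Nnf N -> obs_Nnf m1 N = obs_Nnf m2 N.

Lemma obs_Nnf_app a b N : obs_Nnf (a ++ b) N = obs_Nnf a N + obs_Nnf b N.
Proof. induction a as [| pM a IH]; simpl; [ring | rewrite IH; ring]. Qed.

Lemma obs_Nnf_scale q a N : obs_Nnf (scale q a) N = q * obs_Nnf a N.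
Proof.
  induction a as [| [p M] a IH]; simpl; [ring |].
  rewrite IH; destruct term_eq_dec; ring.
Qed.

Lemma obs_Nnf_perm a b N : Permutation a b -> obs_Nnf a N = obs_Nnf b N.
Proof. induction 1; simpl; [reflexivity | congruence | ring | congruence]. Qed.

Lemma obs_Nnf_normal_free a N : normal_free a -> Nnf N -> obs_Nnf a N = 0.
Proof.
  intros F HN; induction F as [| [p M] a HM _ IH]; simpl; [reflexivity |].
  destruct term_eq_dec as [-> | _]; [contradiction | rewrite IH; ring].
Qed.

Lemma obs_joinable_obs_equiv m1 m2 : obs_joinable m1 m2 -> obs_equiv m1 m2.
Proof.
  intros [-> | (F1 & F2 & _)] N HN; [reflexivity |].
  rewrite (obs_Nnf_normal_free F1 HN), (obs_Nnf_normal_free F2 HN); reflexivity.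
Qed.

Lemma obs_equiv_app a1 a2 b1 b2 :
  obs_equiv a1 a2 -> obs_equiv b1 b2 -> obs_equiv (a1 ++ b1) (a2 ++ b2).
Proof. intros Ha Hb N HN; rewrite !obs_Nnf_app, (Ha N HN), (Hb N HN); reflexivity. Qed.

Lemma obs_equiv_scale q a b : obs_equiv a b -> obs_equiv (scale q a) (scale q b).
Proof. intros H N HN; rewrite !obs_Nnf_scale, (H N HN); reflexivity. Qed.

Lemma obs_equiv_perm a1 a2 b1 b2 :
  Permutation a1 b1 -> Permutation a2 b2 -> obs_equiv a1 a2 -> obs_equiv b1 b2.
Proof.
  intros P1 P2 H N HN; rewrite <- (obs_Nnf_perm N P1), <- (obs_Nnf_perm N P2); exact (H N HN).
Qed.

Lemma joinable_refl m : joinable m m.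
Proof. destruct (fullLiftE_total m) as [s Hs]; exists s; split; exact Hs. Qed.

Lemma obs_joinable_joinable m1 m2 : obs_joinable m1 m2 -> joinable m1 m2.
Proof. intros [-> | (_ & _ & J)]; [apply joinable_refl | exact J]. Qed.

Lemma joinable_app a1 a2 b1 b2 :
  joinable a1 a2 -> joinable b1 b2 -> joinable (a1 ++ b1) (a2 ++ b2).
Proof.
  intros (s & X1 & X2) (t & Y1 & Y2).
  exists (s ++ t); split; apply fullLiftE_app; assumption.
Qed.

Lemma joinable_scale q a b : joinable a b -> joinable (scale q a) (scale q b).
Proof. intros (s & X & Y); exists (scale q s); split; apply fullLiftE_scale; assumption. Qed.

Lemma joinable_perm a1 a2 b1 b2 :
  Permutation a1 b1 -> Permutation a2 b2 -> joinable a1 a2 -> joinable b1 b2.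
Proof.
  intros P1 P2 (s & X & Y); exists s; split; eapply fullLiftE_perm_l; eassumption.
Qed.

Lemma liftL_joinable_obs_equiv m a b : liftL m a -> liftL m b ->
  joinable a b /\ obs_equiv a b.
Proof.
  intros Ha; revert b.
  induction Ha as [| p M m1 l a Hm1 _ IH]; intros b Hb;
    inversion Hb as [| ? ? m2 ? b' Hm2 Hl2]; subst.
  - split; [apply joinable_refl | intros N _; reflexivity].
  - destruct (IH _ Hl2) as [J O]; pose proof (lift1_obs_joinable Hm1 Hm2) as L.
    split.
    + apply joinable_app; [apply joinable_scale, obs_joinable_joinable, L | exact J].
    + apply obs_equiv_app; [apply obs_equiv_scale, obs_joinable_obs_equiv, L | exact O].
Qed.

Theorem mainTheorem7 :
  forall m n1 n2 : mdist,
    is_mdist m ->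
    fullLiftE m n1 -> fullLiftE m n2 ->
    (Permutation n1 n2 \/ exists s, fullLiftE n1 s /\ fullLiftE n2 s) /\
    (forall N : term, Nnf N -> obs_Nnf n1 N = obs_Nnf n2 N).
Proof.
  intros m n1 n2 _ (a & Ha & Pa) (b & Hb & Pb).
  destruct (liftL_joinable_obs_equiv Ha Hb) as [J O].
  split; [right; exact (joinable_perm Pa Pb J) | exact (obs_equiv_perm Pa Pb O)].
Qed.
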